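(* Consider the curved-exam game described in the context. Fix a student $i$, an effort $x_i\in[0,1)$ and an increment $\Delta x_i>0$ with $x_i+\Delta x_i<1$. Then the extended-real-valued function $$x_{-i}\longmapsto \log U_i(x_i+\Delta x_i,x_{-i})-\log U_i(x_i,x_{-i})\qquad(\log 0:=-\infty)$$ is non-decreasing in each opponent effort $x_j$, $j\neq i$, on $[0,1]^{n-1}$.
   Context: The curved-exam game $\Gamma_n$: fix an integer $n\ge 2$ (number of students), ability parameters $\alpha_1,\dots,\alpha_n\in(0,1)$ and a target mean $m\in(0,1)$. Each student $i\in\{1,\dots,n\}$ chooses an effort $x_i\in[0,1]$; write $x=(x_1,\dots,x_n)$, $x_{-i}=(x_j)_{j\neq i}$, $\bar x=\frac1n\sum_{j=1}^n x_j$ and $\bar x_{-i}=\frac1{n-1}\sum_{j\neq i}x_j$. Student $i$'s curved grade is $G_i(x)=x_i+\max(m-\bar x,0)=\max\!\big(m+\tfrac{n-1}{n}(x_i-\bar x_{-i}),\,x_i\big)$ (never truncated at $1$), his leisure is $1-x_i$, and his payoff is $U_i(x)=G_i(x)^{\alpha_i}(1-x_i)^{1-\alpha_i}$. *)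

From HB Require Import structures.
From mathcomp Require Import all_boot all_order all_algebra.
From mathcomp Require Import all_classical all_reals all_analysis.
Set Implicit Arguments. Unset Strict Implicit. Unset Printing Implicit Defensive.
Import Order.TTheory GRing.Theory Num.Theory.
Local Open Scope ring_scope.

Section CurvedExam.
Variables (R : realType) (n : nat).

Definition mean_effort (x : 'I_n -> R) : R := (\sum_(j < n) x j) / n%:R.

(* curved grade G_i(x) = x_i + max(m - \bar x, 0) (never truncated at 1) *)
Definition grade (m : R) (x : 'I_n -> R) (i : 'I_n) : R :=
  x i + Num.max (m - mean_effort x) 0.

(* payoff U_i(x) = G_i(x)^alpha_i * (1 - x_i)^(1 - alpha_i), real powers via powR
   (with 0 `^ a = 0 for a <> 0) *)
Definition payoff (alpha : 'I_n -> R) (m : R) (x : 'I_n -> R) (i : 'I_n) : R :=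
  (grade m x i) `^ (alpha i) * (1 - x i) `^ (1 - alpha i).

Definition upd (x : 'I_n -> R) (i : 'I_n) (v : R) : 'I_n -> R :=
  fun k => if k == i then v else x k.

End CurvedExam.

Definition elog (R : realType) (u : R) : \bar R :=
  if 0 < u then (ln u)%:E else -oo%E.

Definition log_gain (R : realType) (n : nat) (alpha : 'I_n -> R) (m : R)
  (i : 'I_n) (xi dx : R) (x : 'I_n -> R) : \bar R :=
  (elog (payoff alpha m (upd x i (xi + dx)) i) - elog (payoff alpha m (upd x i xi) i))%E.

(* Write S for the total effort of the opponents of student i, N for the
   number of students and g(v, S) = v + max(m - (v + S)/N, 0) for the grade of
   i when he exerts effort v.  Only the factor g^alpha of the payoff depends on
   S, so the log-gain is monotone in S as soon as the ratio
   g(v + d, S) / g(v, S) is non-decreasing in S.  Writing c = m - (v + S)/N,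
   which decreases with S, this ratio is (v + d + max(c - d/N, 0)) / (v + max(c, 0)),
   and a case analysis on the signs of c and c - d/N shows that it is
   non-increasing in c because d/N <= d.  When g(v, S) = 0 the log-gain is
   +oo, and g(v, .) is non-increasing, so this case is harmless. *)
From HB Require Import structures.
From mathcomp Require Import all_boot all_order all_algebra.
From mathcomp Require Import all_classical all_reals all_analysis.
From mathcomp Require Import ring lra.
Import Order.TTheory GRing.Theory Num.Theory.
Local Open Scope ring_scope.

Section OwnGrade.
Variable R : realType.

Definition own_grade (m N v S : R) : R := v + Num.max (m - (v + S) / N) 0.

Lemma sum_upd n (x : 'I_n -> R) (i : 'I_n) (v : R) :
  \sum_(k < n) upd x i v k = v + \sum_(k < n | k != i) x k.
Proof.
rewrite (bigD1 i) //= /upd eqxx; congr (_ + _).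
by apply: eq_bigr => k /negbTE ->.
Qed.

Lemma upd_id n (x : 'I_n -> R) (i : 'I_n) (v : R) : upd x i v i = v.
Proof. by rewrite /upd eqxx. Qed.

Lemma grade_upd n (m : R) (x : 'I_n -> R) (i : 'I_n) (v : R) :
  grade m (upd x i v) i = own_grade m n%:R v (\sum_(k < n | k != i) x k).
Proof. by rewrite /grade /mean_effort sum_upd upd_id. Qed.

Lemma own_grade_ge0 (m N v S : R) : 0 <= v -> 0 <= own_grade m N v S.
Proof. by move=> v_ge0; rewrite addr_ge0 // le_max lexx orbT. Qed.

Lemma own_grade_gt0 (m N v S : R) : 0 < v -> 0 < own_grade m N v S.
Proof. by move=> v_gt0; rewrite ltr_wpDr // le_max lexx orbT. Qed.

Lemma own_grade_antitone (m N v S S' : R) :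
  0 < N -> S <= S' -> own_grade m N v S' <= own_grade m N v S.
Proof.
move=> N_gt0 leSS'; rewrite lerD2l le_max2 // lerB // ler_pM2r ?invr_gt0 //.
by rewrite lerD2l.
Qed.

Lemma max_shift_cross_le (v d e u w : R) :
  0 <= v -> 0 < e -> e <= d -> w <= u ->
  (v + d + Num.max (u - e) 0) * (v + Num.max w 0) <=
  (v + d + Num.max (w - e) 0) * (v + Num.max u 0).
Proof.
move=> v_ge0 e_gt0 le_ed le_wu; rewrite /Num.max.
by do 4 (case: ifP; rewrite ?ltNge => ?); nra.
Qed.

Lemma own_grade_ratio_monotone (m N v d S S' : R) :
  1 <= N -> 0 <= v -> 0 < d -> S <= S' ->
  own_grade m N (v + d) S * own_grade m N v S' <=
  own_grade m N (v + d) S' * own_grade m N v S.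
Proof.
move=> N_ge1 v_ge0 d_gt0 leSS'.
have N_gt0 : 0 < N by lra.
have shift T : own_grade m N (v + d) T
    = v + d + Num.max (m - (v + T) / N - d / N) 0.
  by rewrite /own_grade !mulrDl; congr (_ + Num.max _ _); ring.
rewrite !shift; apply: max_shift_cross_le => //.
- by rewrite divr_gt0.
- by rewrite ler_pdivrMr //; nra.
- by rewrite lerB // ler_pM2r ?invr_gt0 // lerD2l.
Qed.

End OwnGrade.

Lemma elog_powR_mul (R : realType) (a G w : R) :
  0 < a < 1 -> 0 <= G -> 0 < w ->
  elog (G `^ a * w `^ (1 - a)) =
  if 0 < G then (a * ln G + (1 - a) * ln w)%:E else -oo%E.
Proof.
case/andP=> a_gt0 a_lt1 G_ge0 w_gt0; rewrite /elog; case: (ltP 0 G) => G0.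
  by rewrite mulr_gt0 ?powR_gt0 // lnM ?posrE ?powR_gt0 // !ln_powR.
have -> : G = 0 by apply/eqP; rewrite eq_le G0 G_ge0.
by rewrite powR0 ?mul0r ?ltxx // gt_eqF.
Qed.

(* The ratio condition [g1 / g0 <= h1 / h0] is cross-multiplied so that [h0 = 0]
   (a log-gain of +oo) is allowed. *)
Lemma elog_gain_le (R : realType) (a g1 g0 h1 h0 w1 w0 : R) :
  0 < a < 1 -> 0 < w1 -> 0 < w0 -> 0 < g1 -> 0 < h1 -> 0 <= h0 -> h0 <= g0 ->
  g1 * h0 <= h1 * g0 ->
  (elog (g1 `^ a * w1 `^ (1 - a)) - elog (g0 `^ a * w0 `^ (1 - a)) <=
   elog (h1 `^ a * w1 `^ (1 - a)) - elog (h0 `^ a * w0 `^ (1 - a)))%E.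
Proof.
move=> a01 w1_gt0 w0_gt0 g1_gt0 h1_gt0 h0_ge0 le_h0g0 cross.
have g0_ge0 : 0 <= g0 by apply: le_trans le_h0g0.
have /andP[a_gt0 a_lt1] := a01.
rewrite !elog_powR_mul ?(ltW g1_gt0) ?(ltW h1_gt0) // g1_gt0 h1_gt0.
case: (ltP 0 h0) => h0_gt0 /=; last by rewrite leey.
have g0_gt0 : 0 < g0 by apply: lt_le_trans le_h0g0.
rewrite g0_gt0 lee_fin.
suff : ln g1 + ln h0 <= ln h1 + ln g0 by nra.
by rewrite -!lnM ?posrE // ler_ln ?posrE ?mulr_gt0.
Qed.

Theorem mainTheorem1 (R : realType) (n : nat) (hn : (2 <= n)%N)
  (alpha : 'I_n -> R) (halpha : forall k, 0 < alpha k < 1)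
  (m : R) (hm : 0 < m < 1)
  (i : 'I_n) (xi dx : R) (hxi : 0 <= xi < 1) (hdx : 0 < dx) (hxdx : xi + dx < 1)
  (j : 'I_n) (hji : j != i)
  (x y : 'I_n -> R)
  (hx : forall k, k != i -> 0 <= x k <= 1)
  (hy : forall k, k != i -> 0 <= y k <= 1)
  (hxy : forall k, k != i -> k != j -> x k = y k)
  (hxyj : x j <= y j) :
  (log_gain alpha m i xi dx x <= log_gain alpha m i xi dx y)%E.
Proof.
have N_ge1 : 1 <= n%:R :> R by rewrite ler1n; apply: leq_trans hn.
have /andP[xi_ge0 xi_lt1] := hxi.
have leS : \sum_(k < n | k != i) x k <= \sum_(k < n | k != i) y k.
  apply: ler_sum => k k_i; have [->|k_j] := eqVneq k j; first exact: hxyj.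
  by rewrite hxy.
rewrite /log_gain /payoff !grade_upd !upd_id.
apply: elog_gain_le.
- exact: halpha.
- by rewrite subr_gt0.
- by rewrite subr_gt0.
- by rewrite own_grade_gt0 // ltr_wpDl.
- by rewrite own_grade_gt0 // ltr_wpDl.
- exact: own_grade_ge0.
- exact: own_grade_antitone (lt_le_trans ltr01 N_ge1) leS.
- exact: own_grade_ratio_monotone.
Qed.
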